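(* Consider searching on a line with turn cost $t$ and lower bound $\lambda>0$. If $\frac{t}{2\lambda}>1$, then every search strategy has competitive ratio strictly greater than $9$.
   Context: Searching on a line with turn cost. Fix $\lambda>0$, $t\ge 0$. A search strategy is a sequence $\mathcal S(i)=(x_i,r_i)$, $i\ge1$, with $x_i>0$, $r_i\in\{\mathrm{left},\mathrm{right}\}$ and $\sup\{x_i:r_i=\mathrm{left}\}=\sup\{x_i:r_i=\mathrm{right}\}=\infty$. At step $i$ the searcher walks distance $x_i$ from the origin along ray $r_i$ and, if the target is not found, walks back to the origin, paying an additional turn cost $t$; thus each unsuccessful step costs $2x_i+t$. The target is on one of the two rays at unknown distance $D\ge\lambda$ and is found at the first step $j$ with $r_j$ equal to its ray and $x_j\ge D$; the total cost is then $\sum_{i=1}^{j-1}(2x_i+t)+D$. The competitive ratio of $\mathcal S$ is the supremum over all target positions of total cost divided by $D$. *)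

From Stdlib Require Import Reals Lra.
Open Scope R_scope.

Inductive ray := left | right.

(* A search strategy: step i (i = 0,1,2,... corresponds to the paper's
   i = 1,2,3,...) goes distance x i along ray r i. *)
Record strategy := mkStrategy { sx : nat -> R ; sr : nat -> ray }.

Definition valid_strategy (s : strategy) : Prop :=
  (forall i, 0 < sx s i) /\
  (forall M : R, exists i, sr s i = left /\ M < sx s i) /\
  (forall M : R, exists i, sr s i = right /\ M < sx s i).

Fixpoint prefix_cost (s : strategy) (t : R) (n : nat) : R :=
  match n with
  | O => 0
  | Datatypes.S n' => prefix_cost s t n' + (2 * sx s n' + t)
  end.

Definition found_at (s : strategy) (b : ray) (D : R) (j : nat) : Prop :=
  sr s j = b /\ D <= sx s j /\
  (forall i, (i < j)%nat -> ~ (sr s i = b /\ D <= sx s i)).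

Definition search_cost (s : strategy) (t D : R) (j : nat) : R :=
  prefix_cost s t j + D.

(* The competitive ratio (a supremum, possibly +infinity) is > c iff this fails. *)
Definition competitive_ratio_le (s : strategy) (lam t c : R) : Prop :=
  forall (b : ray) (D : R) (j : nat),
    lam <= D -> found_at s b D j -> search_cost s t D j / D <= c.

(* Call step k a record if it goes farther along its ray than every earlier
   step on that ray (and farther than lambda).  If the ratio were at most 9,
   hiding the target just beyond the previous reach on the ray of a record k
   shows that the cost spent before k is at most 8 times that reach.  Follow
   the records that alternate between the two rays: their prefix costs p_n
   then satisfy p_(n+2) <= 4 p_(n+1) - 4 p_n - 4t, and t > 2 lambda makes the
   sequence p_n + 4t start below its critical growth rate 2, which forces it
   to become negative. *)

From Stdlib Require Import Reals Lra Arith Lia Wf_nat IndefiniteDescription Classical.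
Open Scope R_scope.

Lemma twice_le_of_nonneg_subrecurrence (q : nat -> R) :
  (forall n, 0 <= q n) ->
  (forall n, q (S (S n)) <= 4 * q (S n) - 4 * q n) ->
  2 * q O <= q 1%nat.
Proof.
  intros Hpos Hrec. apply Rnot_lt_le. intros Hlt.
  set (h := q 1%nat - 2 * q O).
  assert (Hgap : forall n, q (S n) - 2 * q n <= 2 ^ n * h).
  { induction n as [|n IH]; simpl.
    - unfold h. lra.
    - specialize (Hrec n). lra. }
  assert (Hbound : forall n, q n <= 2 ^ n * (q O + INR n * h / 2)).
  { induction n as [|n IH].
    - simpl. lra.
    - specialize (Hgap n). rewrite S_INR. simpl. lra. }
  destruct (INR_unbounded (2 * q O / - h)) as [n Hn].
  apply Rmult_gt_compat_r with (r := - h) in Hn; [|unfold h; lra].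
  replace (2 * q O / - h * - h) with (2 * q O) in Hn by (field; unfold h; lra).
  assert (Hpow : 0 < 2 ^ n) by (apply pow_lt; lra).
  specialize (Hbound n). specialize (Hpos n).
  assert (2 ^ n * (q O + INR n * h / 2) < 0) by nra.
  lra.
Qed.

Lemma classical_least_nat (P : nat -> Prop) :
  (exists n, P n) -> exists n, P n /\ forall m, P m -> (n <= m)%nat.
Proof.
  intros Hex.
  destruct (dec_inh_nat_subset_has_unique_least_element P (fun n => classic (P n)) Hex)
    as [n [Hn _]].
  exists n. exact Hn.
Qed.

Definition ray_eq_dec (a b : ray) : {a = b} + {a <> b}.
Proof. decide equality. Defined.

Definition other (b : ray) : ray := match b with left => right | right => left end.

Lemma other_neq (b : ray) : other b <> b.
Proof. destruct b; discriminate. Qed.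

Lemma other_involutive (b : ray) : other (other b) = b.
Proof. destruct b; reflexivity. Qed.

Lemma valid_strategy_unbounded (s : strategy) :
  valid_strategy s -> forall b M, exists i, sr s i = b /\ M < sx s i.
Proof. intros [_ [HL HR]] [|]; assumption. Qed.

Section Records.
Variables (s : strategy) (lam : R).

(* Distance explored on ray [b] by the first [n] steps, floored at [lam]:
   no target is closer than [lam]. *)
Fixpoint reach (b : ray) (n : nat) : R :=
  match n with
  | O => lam
  | S n => if ray_eq_dec (sr s n) b then Rmax (reach b n) (sx s n) else reach b n
  end.

Definition is_record (k : nat) : Prop := reach (sr s k) k < sx s k.

Lemma reach_ge_lam b n : lam <= reach b n.
Proof.
  induction n as [|n IH]; simpl; [lra|].
  destruct (ray_eq_dec (sr s n) b); [|exact IH].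
  apply Rle_trans with (reach b n); [exact IH | apply Rmax_l].
Qed.

Lemma reach_le_S b n : reach b n <= reach b (S n).
Proof. simpl. destruct (ray_eq_dec (sr s n) b); [apply Rmax_l | lra]. Qed.

Lemma reach_mono b m n : (m <= n)%nat -> reach b m <= reach b n.
Proof.
  induction 1 as [|n _ IH]; [lra|].
  apply Rle_trans with (reach b n); [exact IH | apply reach_le_S].
Qed.

Lemma sx_le_reach i n : (i < n)%nat -> sx s i <= reach (sr s i) n.
Proof.
  intros Hin. apply Rle_trans with (reach (sr s i) (S i)); [|apply reach_mono; lia].
  simpl. destruct (ray_eq_dec (sr s i) (sr s i)) as [_|Hne]; [apply Rmax_r | congruence].
Qed.

Lemma reach_S_of_not_record b i :
  (sr s i = b -> ~ is_record i) -> reach b (S i) = reach b i.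
Proof.
  intros Hnr. simpl. destruct (ray_eq_dec (sr s i) b) as [Hb|_]; [|reflexivity].
  apply Rmax_left. apply Rnot_lt_le. intros Hlt. apply (Hnr Hb).
  unfold is_record. rewrite Hb. exact Hlt.
Qed.

Lemma reach_const b a j : (a <= j)%nat ->
  (forall i, (a <= i < j)%nat -> sr s i = b -> ~ is_record i) ->
  reach b j = reach b a.
Proof.
  induction 1 as [|j Haj IH]; intros Hnr; [reflexivity|].
  rewrite reach_S_of_not_record by (apply Hnr; lia).
  apply IH. intros i Hi. apply Hnr. lia.
Qed.

Lemma exists_record_on_ray b a :
  (forall M, exists i, sr s i = b /\ M < sx s i) ->
  exists k, (a <= k)%nat /\ sr s k = b /\ is_record k.
Proof.
  intros Hunb. destruct (Hunb (reach b a)) as [i [Hb Hi]].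
  assert (Hai : (a <= i)%nat).
  { destruct (le_lt_dec a i) as [Hle|Hlt]; [exact Hle|].
    pose proof (sx_le_reach i a Hlt). rewrite Hb in *. lra. }
  destruct (classic (exists k, (a <= k < i)%nat /\ sr s k = b /\ is_record k))
    as [[k [Hk [Hkb Hkr]]]|Hnone].
  - exists k. split; [lia|]. split; assumption.
  - exists i. split; [exact Hai|]. split; [exact Hb|].
    unfold is_record. rewrite Hb, (reach_const b a i Hai); [exact Hi|].
    intros k Hk Hkb Hkr. apply Hnone. exists k. auto.
Qed.

Record alternating_records (f : nat -> nat) : Prop := {
  ar_record : forall n, is_record (f n);
  ar_ray : forall n, sr s (f (S n)) = other (sr s (f n));
  ar_lt : forall n, (f n < f (S n))%nat;
  ar_gap : forall n i, (f n < i < f (S n))%nat -> sr s i = sr s (f (S n)) -> ~ is_record i;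
  ar_first : forall i, (i < f O)%nat -> ~ is_record i }.

Lemma exists_alternating_records :
  (forall b M, exists i, sr s i = b /\ M < sx s i) ->
  exists f, alternating_records f.
Proof.
  intros Hunb.
  destruct (classical_least_nat is_record) as [f0 [Hf0 Hf0_least]].
  { destruct (exists_record_on_ray left O (Hunb left)) as [k [_ [_ Hk]]]. exists k. exact Hk. }
  set (next_spec := fun j k => (j < k)%nat /\ sr s k = other (sr s j) /\ is_record k).
  destruct (functional_choice
              (fun j k => next_spec j k /\ forall k', next_spec j k' -> (k <= k')%nat))
    as [next Hnext].
  { intros j. apply classical_least_nat.
    destruct (exists_record_on_ray (other (sr s j)) (S j) (Hunb _)) as [k [Hk [Hkb Hkr]]].
    exists k. repeat split; [lia | exact Hkb | exact Hkr]. }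
  exists (fun n => Nat.iter n next f0). split; simpl.
  - intros [|n]; [exact Hf0 | apply Hnext].
  - intros n. apply Hnext.
  - intros n. apply Hnext.
  - intros n i Hi Hb Hr. destruct (Hnext (Nat.iter n next f0)) as [[_ [Hray _]] Hleast].
    assert (Hle : (next (Nat.iter n next f0) <= i)%nat).
    { apply Hleast. repeat split; [lia | congruence | exact Hr]. }
    lia.
  - intros i Hi Hr. specialize (Hf0_least i Hr). lia.
Qed.

Section Alternating.
Variable f : nat -> nat.
Hypothesis Hf : alternating_records f.

Lemma alternating_reach_SS n :
  reach (sr s (f n)) (f (S (S n))) = reach (sr s (f n)) (f (S n)).
Proof.
  pose proof (ar_lt _ Hf (S n)).
  assert (Hb : sr s (f (S (S n))) = sr s (f n)).
  { rewrite (ar_ray _ Hf (S n)), (ar_ray _ Hf n). apply other_involutive. }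
  rewrite (reach_const _ (S (f (S n)))); [| lia |].
  - apply reach_S_of_not_record. intros Hb'.
    rewrite (ar_ray _ Hf n) in Hb'. contradiction (other_neq _ Hb').
  - intros i Hi Hib. apply (ar_gap _ Hf (S n)); [lia | congruence].
Qed.

Lemma alternating_reach_1 : reach (sr s (f 1%nat)) (f 1%nat) = lam.
Proof.
  apply (reach_const _ O); [lia|]. intros i Hi Hib.
  destruct (lt_eq_lt_dec i (f O)) as [[Hlt|Heq]|Hgt].
  - apply (ar_first _ Hf i Hlt).
  - subst i. rewrite (ar_ray _ Hf O) in Hib. contradiction (other_neq _ (eq_sym Hib)).
  - apply (ar_gap _ Hf O); [lia | exact Hib].
Qed.

End Alternating.

Section Costs.
Variable t : R.
Hypothesis Hx : forall i, 0 < sx s i.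
Hypothesis Ht : 0 <= t.

Lemma prefix_cost_nonneg n : 0 <= prefix_cost s t n.
Proof. induction n as [|n IH]; simpl; [lra|]. specialize (Hx n). lra. Qed.

(* As [a] is a record, the reach at [j] is attained by a step in [a, j),
   whose round trip is paid for between [a] and [j]. *)
Lemma record_cost_gap a j : is_record a -> (a < j)%nat ->
  2 * reach (sr s a) j + t <= prefix_cost s t j - prefix_cost s t a.
Proof.
  intros Hra. induction 1 as [|m Ham IH]; cbn [reach prefix_cost].
  - destruct (ray_eq_dec (sr s a) (sr s a)) as [_|Hne]; [|congruence].
    unfold is_record in Hra. rewrite Rmax_right by lra. lra.
  - pose proof (Hx m). pose proof (sx_le_reach a m Ham). pose proof (Hx a).
    destruct (ray_eq_dec (sr s m) (sr s a)); [|lra].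
    unfold Rmax. destruct (Rle_dec (reach (sr s a) m) (sx s m)); lra.
Qed.

Lemma record_cost_le c k : 0 < lam -> 1 < c ->
  competitive_ratio_le s lam t c -> is_record k ->
  prefix_cost s t k <= (c - 1) * reach (sr s k) k.
Proof.
  intros Hlam Hc1 Hc Hk. unfold is_record in Hk.
  set (m := reach (sr s k) k) in *. set (P := prefix_cost s t k).
  pose proof (reach_ge_lam (sr s k) k) as Hm. fold m in Hm.
  apply Rnot_lt_le. intros HP.
  assert (HPc : m < P / (c - 1)).
  { apply Rmult_lt_reg_r with (c - 1); [lra|].
    unfold Rdiv. rewrite Rmult_assoc, Rinv_l by lra. lra. }
  (* Hide the target just past [m]: it is only found at step [k]. *)
  set (D := (m + Rmin (sx s k) (P / (c - 1))) / 2).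
  assert (HD : m < D /\ D <= sx s k /\ D < P / (c - 1)).
  { unfold D, Rmin. destruct (Rle_dec (sx s k) (P / (c - 1))); lra. }
  assert (Hfound : found_at s (sr s k) D k).
  { split; [reflexivity|]. split; [lra|]. intros i Hi [Hib HiD].
    pose proof (sx_le_reach i k Hi) as Hle. rewrite Hib in Hle. fold m in Hle. lra. }
  specialize (Hc (sr s k) D k ltac:(lra) Hfound). unfold search_cost in Hc. fold P in Hc.
  assert (HcD : P + D <= c * D).
  { replace (P + D) with ((P + D) / D * D) by (field; lra). nra. }
  assert (HDc : (c - 1) * D < P).
  { replace P with (P / (c - 1) * (c - 1)) by (field; lra). nra. }
  lra.
Qed.

Section Alternating_costs.
Variable f : nat -> nat.
Hypothesis Hf : alternating_records f.
Hypothesis Hlam : 0 < lam.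
Hypothesis Hc : competitive_ratio_le s lam t 9.

Lemma alternating_cost_recurrence n :
  prefix_cost s t (f (S (S n))) <=
  4 * prefix_cost s t (f (S n)) - 4 * prefix_cost s t (f n) - 4 * t.
Proof.
  pose proof (record_cost_le 9 _ Hlam ltac:(lra) Hc (ar_record _ Hf (S (S n)))) as Hcost.
  assert (Hb : sr s (f (S (S n))) = sr s (f n)).
  { rewrite (ar_ray _ Hf (S n)), (ar_ray _ Hf n). apply other_involutive. }
  rewrite Hb, (alternating_reach_SS f Hf n) in Hcost.
  pose proof (record_cost_gap (f n) (f (S n)) (ar_record _ Hf n) (ar_lt _ Hf n)).
  lra.
Qed.

Lemma alternating_cost_1 : prefix_cost s t (f 1%nat) <= 8 * lam.
Proof.
  pose proof (record_cost_le 9 _ Hlam ltac:(lra) Hc (ar_record _ Hf 1)) as Hcost.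
  rewrite (alternating_reach_1 f Hf) in Hcost. lra.
Qed.

End Alternating_costs.
End Costs.
End Records.

Theorem lemma2 (lam t : R) (Hlam : 0 < lam) (Ht : 0 <= t)
  (Hratio : t / (2 * lam) > 1) (s : strategy) (Hs : valid_strategy s) :
  ~ competitive_ratio_le s lam t 9.
Proof.
  intros Hc.
  assert (Ht2 : 2 * lam < t).
  { replace t with (t / (2 * lam) * (2 * lam)) by (field; lra). nra. }
  pose proof (proj1 Hs) as Hx.
  destruct (exists_alternating_records s lam (valid_strategy_unbounded s Hs)) as [f Hf].
  pose proof (twice_le_of_nonneg_subrecurrence (fun n => prefix_cost s t (f n) + 4 * t))
    as Hgrowth; simpl in Hgrowth.
  pose proof (alternating_cost_1 s lam t f Hf Hlam Hc).
  pose proof (prefix_cost_nonneg s t Hx Ht (f O)).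
  enough (2 * (prefix_cost s t (f O) + 4 * t) <= prefix_cost s t (f 1%nat) + 4 * t) by lra.
  apply Hgrowth.
  - intros n. pose proof (prefix_cost_nonneg s t Hx Ht (f n)). lra.
  - intros n. pose proof (alternating_cost_recurrence s lam t Hx Ht f Hf Hlam Hc n). lra.
Qed.
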